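(* Let $\Sigma$ be an alphabet with $|\Sigma|\ge 2$, let $n\ge 2$ and $L\ge 1$ be integers, and let $\mathcal{H}$ be a finite family of functions $\Sigma^n\to[0,2^L)$ such that every $h\in\mathcal{H}$ is recursive. Then $\mathcal{H}$ is not $3$-wise trailing-zero independent.
   Context: An $n$-gram is an element $(x_1,\dots,x_n)\in\Sigma^n$. A hash function $h:\Sigma^n\to[0,2^L)$ is recursive if there is a function $F$ (which may depend on $h$) such that $h(x_2,\dots,x_{n+1})=F(h(x_1,\dots,x_n),x_1,x_{n+1})$ for all $x_1,\dots,x_{n+1}\in\Sigma$. For an integer $y\in[0,2^L)$, $\mathrm{zeros}(y)\in\{0,1,\dots,L\}$ denotes the number of trailing zeros in the $L$-bit binary representation of $y$, with $\mathrm{zeros}(0)=L$. With $h$ drawn uniformly at random from $\mathcal{H}$, the family is $k$-wise trailing-zero independent if for all pairwise distinct $n$-grams $x_1,\dots,x_k$ and all $j_1,\dots,j_k\in\{0,1,\dots,L\}$ one has $P(\mathrm{zeros}(h(x_1))\ge j_1\wedge\cdots\wedge \mathrm{zeros}(h(x_k))\ge j_k)=2^{-j_1-\cdots-j_k}$. *)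

From HB Require Import structures.
From mathcomp Require Import all_boot all_order all_algebra.
Set Implicit Arguments. Unset Strict Implicit. Unset Printing Implicit Defensive.
Import Order.TTheory GRing.Theory Num.Theory.

Definition ngram (S : finType) (n : nat) := {ffun 'I_n -> S}.

Definition hashfun (S : finType) (n L : nat) := {ffun ngram S n -> 'I_(2 ^ L)}.

(* trailing zeros of the L-bit representation of y; zeros 0 = L.
   For 0 < y, logn 2 y is the 2-adic valuation = number of trailing zeros. *)
Definition zeros (L y : nat) : nat := if y == 0 then L else logn 2 y.

(* the windows (x_1..x_n) and (x_2..x_{n+1}) of x = (x_1..x_{n+1}) *)
Definition win_first (S : finType) (n : nat) (x : ngram S n.+1) : ngram S n :=
  [ffun i : 'I_n => x (widen_ord (leqnSn n) i)].
Definition win_second (S : finType) (n : nat) (x : ngram S n.+1) : ngram S n :=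
  [ffun i : 'I_n => x (lift ord0 i)].

Definition recursive (S : finType) (n L : nat) (h : hashfun S n L) : Prop :=
  exists F : 'I_(2 ^ L) -> S -> S -> 'I_(2 ^ L),
    forall x : ngram S n.+1,
      h (win_second x) = F (h (win_first x)) (x ord0) (x ord_max).

Definition prob (S : finType) (n L : nat) (H : {set hashfun S n L})
  (E : pred (hashfun S n L)) : rat :=
  ((#|[set h in H | E h]|)%:R / (#|H|)%:R)%R.

Definition tz_indep (S : finType) (n L k : nat) (H : {set hashfun S n L}) : Prop :=
  forall (x : 'I_k -> ngram S n) (j : 'I_k -> nat),
    injective x -> (forall i, j i <= L) ->
    prob H (fun h => [forall i : 'I_k, j i <= zeros L (h (x i))]) =
      (1 / 2%:R ^+ (\sum_(i < k) j i))%R.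

From HB Require Import structures.
From mathcomp Require Import all_boot all_order all_algebra.
Set Implicit Arguments. Unset Strict Implicit. Unset Printing Implicit Defensive.
Import Order.TTheory GRing.Theory Num.Theory.

(* Fix two letters a <> b and consider the "staircase" n-grams
   g_k = a^k b^(n-k).  The (n+1)-gram a^k b^(n+1-k) has first window g_k
   and second window g_(k-1), so for a recursive h there is a single map G
   (namely G y = F y a b) with h g_(k-1) = G (h g_k) for 0 < k <= n.
   Consequently a collision h g_n = h g_(n-1) propagates one step further:
   h g_(n-2) = h g_(n-1).  Hence, for the three distinct n-grams
   g_n, g_(n-1), g_(n-2), the event "the first two hashes are 0" coincides
   with the event "all three hashes are 0".  A hash value has at least L
   trailing zeros exactly when it is 0, so 3-wise independence assigns these
   equal events the probabilities 2^(-2L) and 2^(-3L), forcing L = 0. *)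

Definition staircase (S : finType) (a b : S) (m k : nat) : ngram S m :=
  [ffun i : 'I_m => if i < k then a else b].

Lemma staircase_inj (S : finType) (a b : S) (m k1 k2 : nat) :
  a != b -> k1 <= m -> k2 <= m ->
  staircase a b m k1 = staircase a b m k2 -> k1 = k2.
Proof.
move=> ab k1m k2m E.
wlog lt12 : k1 k2 k1m k2m E / k1 < k2.
  by move=> W; case: (ltngtP k1 k2) => // c; [exact: W | symmetry; exact: W].
have k1m' : k1 < m by apply: leq_trans lt12 k2m.
have := congr1 (fun f : ngram S m => f (Ordinal k1m')) E.
by rewrite !ffunE /= ltnn lt12 => eba; rewrite eba eqxx in ab.
Qed.

Lemma win_first_staircase (S : finType) (a b : S) (m k : nat) :
  win_first (staircase a b m.+1 k) = staircase a b m k.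
Proof. by apply/ffunP => i; rewrite !ffunE. Qed.

Lemma win_second_staircase (S : finType) (a b : S) (m k : nat) :
  win_second (staircase a b m.+1 k) = staircase a b m k.-1.
Proof. by apply/ffunP => i; rewrite !ffunE /=; case: k. Qed.

Lemma recursive_staircase (S : finType) (n L : nat) (h : hashfun S n L)
    (a b : S) :
  recursive h -> exists G : 'I_(2 ^ L) -> 'I_(2 ^ L),
    forall k, 0 < k <= n ->
      h (staircase a b n k.-1) = G (h (staircase a b n k)).
Proof.
case=> F hF; exists (fun y => F y a b) => k /andP[k_gt0 kn].
have := hF (staircase a b n.+1 k).
rewrite win_first_staircase win_second_staircase => ->.
by rewrite !ffunE /= k_gt0 ltnNge kn.
Qed.

Lemma staircase_collision (S : finType) (n L : nat) (h : hashfun S n L)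
    (a b : S) :
  recursive h -> 2 <= n ->
  h (staircase a b n n) = h (staircase a b n n.-1) ->
  h (staircase a b n n.-2) = h (staircase a b n n.-1).
Proof.
move=> /(recursive_staircase a b) [G hG] n2 E.
have n_gt0 : 0 < n by apply: ltnW.
have n1_gt0 : 0 < n.-1 by rewrite -ltnS (ltn_predK n2).
rewrite -[n.-2]/(n.-1.-1) hG; last by rewrite n1_gt0 leq_pred.
by rewrite -E -hG // n_gt0 leqnn.
Qed.

Lemma zeros_full (L : nat) (y : 'I_(2 ^ L)) : (L <= zeros L y) = (y == 0 :> nat).
Proof.
rewrite /zeros; have [_|y_neq0] := eqVneq (y : nat) 0; first by rewrite leqnn.
apply/negbTE; rewrite -ltnNge -(ltn_exp2l _ _ (isT : 1 < 2)).
apply: leq_ltn_trans (ltn_ord y).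
by apply: dvdn_leq; [rewrite lt0n | exact: pfactor_dvdnn].
Qed.

Lemma tz_indep_same_event (S : finType) (n L k : nat) (H : {set hashfun S n L})
    (x : 'I_k -> ngram S n) (j j' : 'I_k -> nat) :
  tz_indep k H -> injective x ->
  (forall i, j i <= L) -> (forall i, j' i <= L) ->
  {in H, forall h : hashfun S n L, [forall i, j i <= zeros L (h (x i))] =
                   [forall i, j' i <= zeros L (h (x i))]} ->
  \sum_(i < k) j i = \sum_(i < k) j' i.
Proof.
move=> indep x_inj jL j'L same.
have sets : [set h in H | [forall i, j i <= zeros L (h (x i))]] =
          [set h in H | [forall i, j' i <= zeros L (h (x i))]].
  by apply/setP => h; rewrite !inE; case hH: (h \in H) => //=; exact: same.
have := indep x j' x_inj j'L; have := indep x j x_inj jL.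
rewrite /prob sets => ->.
move/(congr1 (fun r : rat => r^-1)%R); rewrite !div1r !invrK -!natrX.
by move/eqP; rewrite eqr_nat eqn_exp2l // => /eqP.
Qed.

Theorem mainTheorem1 (S : finType) (n L : nat) (H : {set hashfun S n L}) :
  1 < #|S| -> 2 <= n -> 1 <= L ->
  (forall h, h \in H -> recursive h) ->
  ~ tz_indep 3 H.
Proof.
move=> /card_gt1P [a [b [_ _ ab]]] n2 L_gt0 Hrec indep.
pose x (i : 'I_3) := staircase a b n (n - i).
have i_le_n (i : 'I_3) : i <= n by apply: leq_trans n2; rewrite -ltnS.
have x_inj : injective x.
  move=> i1 i2 /staircase_inj E; apply: ord_inj.
  by rewrite -(subKn (i_le_n i1)) -(subKn (i_le_n i2)) E ?leq_subr.
pose j3 (i : 'I_3) := L.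
pose j2 (i : 'I_3) := if val i == 2 then 0 else L.
have j2L i : j2 i <= L by rewrite /j2; case: ifP.
(* requiring g_n and g_(n-1) to hash to 0 already forces g_(n-2) to do so *)
have same_event : {in H, forall h : hashfun S n L,
    [forall i, j3 i <= zeros L (h (x i))] = [forall i, j2 i <= zeros L (h (x i))]}.
  move=> h hH; apply/forallP/forallP => [all3 i | two i].
    by rewrite /j2; case: ifP => // _; apply: all3.
  have /eqP h0 : h (x ord0) == 0 :> nat by rewrite -zeros_full; exact: two.
  have /eqP h1 : h (x (Ordinal (isT : 1 < 3))) == 0 :> nat.
    by rewrite -zeros_full; exact: two.
  rewrite /x subn0 in h0; rewrite /x subn1 in h1.
  have coll : h (staircase a b n n) = h (staircase a b n n.-1).
    by apply: ord_inj; rewrite h0 h1.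
  rewrite /j3 zeros_full /x; case: i => [[|[|[|//]]] ?] /=; apply/eqnP.
  - by rewrite subn0 h0.
  - by rewrite subn1 h1.
  - by rewrite subn2 (staircase_collision (Hrec h hH) n2 coll) h1.
have := tz_indep_same_event indep x_inj (fun _ => leqnn L) j2L same_event.
rewrite !big_ord_recr !big_ord0 /j2 /= => /eqP.
by rewrite eqn_add2l eqn0Ngt L_gt0.
Qed.
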